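(* For every integer $n\ge 2$, the path $P_n$ on $n$ vertices satisfies $\lambda(P_n)=\lfloor n/2\rfloor$.
   Context: All graphs are finite and simple; $d(u,v)$ denotes the usual graph distance. For integers $m\le n$, $[m,n]=\{m,m+1,\ldots,n\}$. For a graph $G$ and a positive integer $l$, a distance $l$-labeling of $G$ is a function $f:V(G)\to[0,l]$ such that (i) $f(V(G))=[0,l]$ or $f(V(G))=[1,l]$, and (ii) whenever two distinct vertices $u,v$ satisfy $f(u)=f(v)=k$, we have $d(u,v)=k$. The labeling length $\lambda(G)$ is the minimum $l$ for which $G$ admits a distance $l$-labeling. *)

From mathcomp Require Import all_boot.
Set Implicit Arguments. Unset Strict Implicit. Unset Printing Implicit Defensive.

(* A simple graph: finite vertex type T with a symmetric irreflexive relation e. *)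

Fixpoint walk_k (T : finType) (e : rel T) (k : nat) (u v : T) : bool :=
  match k with
  | 0 => u == v
  | k'.+1 => [exists w : T, e u w && walk_k e k' w v]
  end.

(* d(u,v) = k : the shortest walk from u to v has exactly k edges
   (this never holds when u, v lie in different components, where d = oo). *)
Definition dist_eq (T : finType) (e : rel T) (u v : T) (k : nat) : bool :=
  walk_k e k u v && [forall j : 'I_k, ~~ walk_k e j u v].

Definition path_rel (n : nat) : rel 'I_n :=
  fun i j => (i.+1 == j :> nat) || (j.+1 == i :> nat).
Arguments path_rel n : clear implicits.

Definition distance_labeling (T : finType) (e : rel T) (l : nat) (f : T -> nat) : Prop :=
  (forall x, f x <= l) /\
  ((forall k, k <= l -> exists x, f x = k) \/
   ((forall x, 1 <= f x) /\ (forall k, 1 <= k <= l -> exists x, f x = k))) /\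
  (forall u v, u != v -> f u = f v -> dist_eq e u v (f u)).

Definition labeling_length (T : finType) (e : rel T) (l : nat) : Prop :=
  0 < l /\ (exists f, distance_labeling e l f) /\
  (forall l' f, 0 < l' -> distance_labeling e l' f -> l <= l').

From mathcomp Require Import all_boot zify.

Set Implicit Arguments.
Unset Strict Implicit.
Unset Printing Implicit Defensive.

(* On the path, d(i, j) = |i - j|.  Three vertices cannot be pairwise at the
   same distance k > 0, and two vertices cannot be at distance 0, so a
   distance l-labeling uses label 0 at most once and every other label at most
   twice: n <= 2l + 1, i.e. l >= n/2.  Conversely, labelling a segment of the
   path by i |-> |c - 2i| gives label k exactly to the vertices (c - k)/2 and
   (c + k)/2, which are at distance k; splitting P_n into two halves whose
   centres c have opposite parities yields a labeling of length n/2. *)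

Definition distn (a b : nat) : nat := (a - b) + (b - a).

Lemma dist_eq0 (T : finType) (e : rel T) (u v : T) : dist_eq e u v 0 -> u = v.
Proof. by case/andP => /eqP. Qed.

Section PathDistance.

Variable n : nat.
Implicit Types u v w : 'I_n.

Lemma path_rel_distn u w : path_rel n u w -> distn u w = 1.
Proof. by rewrite /path_rel /distn => /orP[] /eqP; lia. Qed.

Lemma path_step_toward u v :
  u != v -> exists w, path_rel n u w && (distn w v == (distn u v).-1).
Proof.
rewrite -(inj_eq val_inj) /= => neq_uv.
have [lt_uv | ge_uv] := ltnP u v.
  have lt_u1n : u.+1 < n by have := ltn_ord v; lia.
  by exists (Ordinal lt_u1n); rewrite /path_rel /distn /= eqxx /=; apply/eqP; lia.
have lt_u1n : u.-1 < n by have := ltn_ord u; lia.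
by exists (Ordinal lt_u1n); rewrite /path_rel /distn /=; apply/andP; split; apply/eqP; lia.
Qed.

Lemma walk_path_distn_le k u v : walk_k (path_rel n) k u v -> distn u v <= k.
Proof.
elim: k u => [|k IHk] u /=; first by move/eqP => ->; rewrite /distn subnn.
case/existsP => w /andP[/path_rel_distn d_uw /IHk]; move: d_uw; rewrite /distn; lia.
Qed.

Lemma walk_path_distn u v : walk_k (path_rel n) (distn u v) u v.
Proof.
suff walk_d d : forall w, distn w v = d -> walk_k (path_rel n) d w v by exact: walk_d.
elim: d {u} => [|d IHd] u d_uv /=.
  by apply/eqP; apply: ord_inj; move: d_uv; rewrite /distn; lia.
have [eq_uv | neq_uv] := eqVneq u v; first by rewrite eq_uv /distn subnn in d_uv.
have [w /andP[e_uw /eqP d_wv]] := path_step_toward neq_uv.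
by apply/existsP; exists w; rewrite e_uw IHd // d_wv d_uv.
Qed.

Lemma dist_eq_pathE u v k : dist_eq (path_rel n) u v k = (distn u v == k).
Proof.
apply/andP/eqP => [[/walk_path_distn_le le_dk /forallP no_shorter] | <-].
  apply/eqP; rewrite eqn_leq le_dk leqNgt; apply/negP => lt_dk.
  by have := no_shorter (Ordinal lt_dk); rewrite walk_path_distn.
split; first exact: walk_path_distn.
by apply/forallP => j; apply/negP => /walk_path_distn_le; have := ltn_ord j; lia.
Qed.

End PathDistance.

Lemma card_le_fibers (T : finType) (f : T -> nat) l :
  (forall x, f x <= l) -> #|[pred x | f x == 0]| <= 1 ->
  (forall k, #|[pred x | f x == k]| <= 2) -> #|T| <= l.*2.+1.
Proof.
move=> f_le_l card0 card2.
have -> : #|T| = \sum_(k < l.+1) #|[pred x | f x == k]|.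
  rewrite -sum1_card (partition_big (fun x => inord (f x) : 'I_l.+1) predT) //=.
  apply: eq_bigr => k _; rewrite -sum1_card; apply: eq_bigl => x /=.
  have fx_lt : f x < l.+1 by rewrite ltnS.
  by apply/eqP/eqP => [<- | fx_k]; [rewrite inordK | apply: val_inj; rewrite /= inordK].
have -> : l.*2.+1 = 1 + \sum_(k < l) 2 by rewrite sum_nat_const card_ord; lia.
by rewrite big_ord_recl leq_add // leq_sum.
Qed.

Lemma card_label_fiber0 (T : finType) (e : rel T) (f : T -> nat) :
  (forall u v, u != v -> f u = f v -> dist_eq e u v (f u)) ->
  #|[pred x | f x == 0]| <= 1.
Proof.
move=> f_dist; apply/card_le1_eqP => u v /eqP fu0 /eqP fv0.
have [// | neq_vu] := eqVneq v u.
by have := f_dist v u neq_vu (etrans fv0 (esym fu0)); rewrite fv0 => /dist_eq0.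
Qed.

Lemma card_path_label_fiber n (f : 'I_n -> nat) k :
  (forall u v, u != v -> f u = f v -> dist_eq (path_rel n) u v (f u)) ->
  #|[pred x | f x == k]| <= 2.
Proof.
move=> f_dist; rewrite leqNgt; apply/card_gt2P.
move=> [x [y [z [[/eqP fx /eqP fy /eqP fz] [neq_xy neq_yz neq_zx]]]]].
have := f_dist _ _ neq_xy (etrans fx (esym fy)).
have := f_dist _ _ neq_yz (etrans fy (esym fz)).
have := f_dist _ _ neq_zx (etrans fz (esym fx)).
rewrite !dist_eq_pathE fx fy fz /distn.
by move: neq_xy neq_yz neq_zx; rewrite -!(inj_eq val_inj) /=; lia.
Qed.

Lemma distance_labeling_path_size n l f :
  distance_labeling (path_rel n) l f -> n <= l.*2.+1.
Proof.
move=> [f_le_l [_ f_dist]]; rewrite -[n]card_ord.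
apply: card_le_fibers f_le_l _ _; first exact: card_label_fiber0 f_dist.
by move=> k; apply: card_path_label_fiber.
Qed.

Definition path_label (n i : nat) : nat :=
  let m := n./2 in
  if odd n then (if i <= m then distn m i.*2 else distn (3 * m).+1 i.*2)
  else if i < m then distn m.-1 i.*2 else if i == m then m else distn (3 * m) i.*2.

Definition path_label_vertex (n k : nat) : nat :=
  let m := n./2 in
  let c := if odd n then m else m.-1 in
  (* m + (c - k)./2 + 1 is the vertex (c' - k)/2 of the second half, whose
     centre c' = c + 2m + 1 has the other parity. *)
  if ~~ odd n && (k == m) then m
  else if odd (c - k) then m + (c - k)./2 + 1 else (c - k)./2.

Lemma path_label_vertexP n k : 2 <= n -> k <= n./2 ->
  path_label_vertex n k < n /\ path_label n (path_label_vertex n k) = k.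
Proof.
rewrite /path_label_vertex /path_label /distn => n_ge2 k_le.
have := odd_double_half n; case: (odd n) => /= n_eq.
  have := odd_double_half (n./2 - k); case: (odd _) => /= c_eq; case: ifP; lia.
have [-> | neq_km] := eqVneq k n./2; first by rewrite eqxx ltnn; lia.
have := odd_double_half (n./2.-1 - k); case: (odd _) => /= c_eq; repeat case: ifP; lia.
Qed.

Lemma path_label_le n i : i < n -> path_label n i <= n./2.
Proof.
rewrite /path_label /distn; have := odd_double_half n.
by case: (odd n) => /=; repeat case: ifP; lia.
Qed.

Lemma path_label_eq_distn n i j : i < n -> j < n -> i != j ->
  path_label n i = path_label n j -> distn i j = path_label n i.
Proof.
rewrite /path_label /distn; have := odd_double_half n.
by case: (odd n) => /=; repeat case: ifP; lia.
Qed.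

Lemma path_label_distance_labeling n : 2 <= n ->
  distance_labeling (path_rel n) n./2 (fun i : 'I_n => path_label n i).
Proof.
move=> n_ge2; split; first by move=> i; apply: path_label_le.
split.
  left=> k k_le; have [lt_vn label_v] := path_label_vertexP n_ge2 k_le.
  by exists (Ordinal lt_vn).
move=> u v neq_uv label_uv; rewrite dist_eq_pathE.
by apply/eqP/path_label_eq_distn => //; rewrite (inj_eq val_inj).
Qed.

Theorem mainTheorem2 (n : nat) (hn : 2 <= n) :
  labeling_length (path_rel n) n./2.
Proof.
have n_eq := odd_double_half n.
split; first by move: n_eq; case: (odd n) => /=; lia.
split; first by exists (fun i : 'I_n => path_label n i); apply: path_label_distance_labeling.
move=> l f _ /distance_labeling_path_size; move: n_eq; case: (odd n) => /=; lia.
Qed.
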